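(* Let $\alpha,\beta,\gamma\in\mathrm{ord}$. If $\alpha<\gamma$ and $\beta<\gamma$, then $\sup(\alpha,\beta)<\gamma$.
   Context: Work constructively. Let $\mathfrak F$ be a set of index sets containing $\mathbb N$ and each $\mathbb N_k=\{n\in\mathbb N:n<k\}$ ($k\ge0$), closed (up to isomorphism) under finitely enumerated subsets, sets of finitely enumerated subsets, and disjoint unions indexed by elements of $\mathfrak F$. A finitely enumerated subset of $A$ is one given by a map $\mathbb N_k\to A$; write $F\subseteq_f I$. The set $\mathrm{ord}$ is inductively generated by $\underline 0$ and, for every family $(\alpha_i)_{i\in I}$ with $I\in\mathfrak F$, $\alpha_i\in\mathrm{ord}$, an element $\mathrm S(\alpha_i)_{i\in I}$; elements of the second kind form $\mathrm{ord}^*$; for such $\alpha$, $I_\alpha=I$ and $\alpha_i$ are its definitional subordinals; $I_{\underline 0}=\emptyset$. For a finite list $F$ in $I_\alpha$, $\alpha_F$ is the list of the $\alpha_i$, $i\in F$. Supremum: for a family $(\alpha^j)_{j\in J}$ in $\mathrm{ord}^*$, $J\in\mathfrak F$, $\sup(\alpha^j)_{j\in J}=\mathrm S(\varepsilon_k)_{k\in K}$ with $K$ the disjoint union of the $I_{\alpha^j}$ (injections $\iota_j$) and $\varepsilon_{\iota_j(i)}=(\alpha^j)_i$; for a finite family in $\mathrm{ord}$, $\sup(\alpha^1,\dots,\alpha^r)$ is $\underline0$ if all are $\underline0$, else the sup of those in $\mathrm{ord}^*$. Relations between an element and a nonempty finite list, by simultaneous induction: $\alpha\le\beta^1,\dots,\beta^m$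 means $\alpha_i<\beta^1,\dots,\beta^m$ for all $i\in I_\alpha$; $\alpha<\beta^1,\dots,\beta^m$ means there exist $F_1\subseteq_f I_{\beta^1},\dots,F_m\subseteq_f I_{\beta^m}$, not all empty, with $\alpha\le\beta^1_{F_1},\dots,\beta^m_{F_m}$ (concatenated list); $\alpha<\gamma$ is the case $m=1$. *)

From mathcomp Require Import all_boot.
Set Implicit Arguments. Unset Strict Implicit. Unset Printing Implicit Defensive.

Record iso (A B : Type) := Iso {
  iso_to : A -> B; iso_from : B -> A;
  iso_toK : forall a, iso_from (iso_to a) = a;
  iso_fromK : forall b, iso_to (iso_from b) = b }.

(* A finitely enumerated subset of A: a map N_k -> A (here 'I_k = N_k). *)
Definition fsub (A : Type) : Type := {k : nat & 'I_k -> A}.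

(* The set of index sets F: codes Idx decoded by El, containing N and every
   N_k, and closed (up to isomorphism) under finitely enumerated subsets,
   sets of finitely enumerated subsets and disjoint unions indexed by
   elements of F. *)
Record IndexSets := {
  Idx :> Type;
  El : Idx -> Type;
  cNat : Idx;
  isoNat : iso (El cNat) nat;
  cN : nat -> Idx;
  isoN : forall k, iso (El (cN k)) 'I_k;
  cSub : forall (I : Idx), fsub (El I) -> Idx;
  isoSub : forall (I : Idx) (F : fsub (El I)),
    iso (El (cSub F)) {j : 'I_(projT1 F) & {i : El I | i = projT2 F j}};
  cFin : Idx -> Idx;
  isoFin : forall I, iso (El (cFin I)) (fsub (El I));
  cSig : forall (J : Idx), (El J -> Idx) -> Idx;
  isoSig : forall (J : Idx) (F : El J -> Idx),
    iso (El (cSig F)) {j : El J & El (F j)} }.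

Arguments El {_} _.
Arguments cSig {_} _ _.
Arguments isoSig {_} _ _.
Arguments cN _ _ : clear implicits.
Arguments isoN _ _ : clear implicits.

Section Ord.
Variable U : IndexSets.

Inductive ord : Type :=
  | OZero : ord
  | OS : forall (I : Idx U), (El I -> ord) -> ord.
Arguments OS : clear implicits.

Definition ix (a : ord) : Type :=
  match a with OZero => Empty_set | OS K _ => El K end.

Definition sub (a : ord) : ix a -> ord :=
  match a as a0 return ix a0 -> ord with
  | OZero => fun e => match e with end
  | OS _ f => f
  end.

Definition subF (a : ord) (F : fsub (ix a)) : seq ord :=
  map (fun j => sub (projT2 F j)) (enum 'I_(projT1 F)).

Inductive choice : seq ord -> Type :=
  | cnil : choice [::]
  | ccons : forall (b : ord) (L : seq ord), fsub (ix b) -> choice L -> choice (b :: L).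

Fixpoint flat (L : seq ord) (c : choice L) : seq ord :=
  match c with
  | cnil => [::]
  | ccons b L F c' => subF F ++ flat c'
  end.

Fixpoint nonempty_choice (L : seq ord) (c : choice L) : Prop :=
  match c with
  | cnil => False
  | ccons b L F c' => 0 < projT1 F \/ nonempty_choice c'
  end.

(* alpha <= beta^1..beta^m  iff  alpha_i < beta^1..beta^m for all i in I_alpha,
   where  gamma < L  iff  exists F_j not all empty with gamma <= concatenation. *)
Fixpoint ord_le (a : ord) (L : seq ord) : Prop :=
  match a with
  | OZero => True
  | OS K f => forall i : El K,
      exists c : choice L, nonempty_choice c /\ ord_le (f i) (flat c)
  end.

Definition ord_lt_list (a : ord) (L : seq ord) : Prop :=
  exists c : choice L, nonempty_choice c /\ ord_le a (flat c).

Definition ord_lt (a g : ord) : Prop := ord_lt_list a [:: g].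

Definition ostar : Type := {I : Idx U & El I -> ord}.

Definition sup_star (J : Idx U) (A : El J -> ostar) : ord :=
  OS (cSig J (fun j => projT1 (A j)))
      (fun k => let p := iso_to (isoSig J (fun j => projT1 (A j))) k in
                projT2 (A (projT1 p)) (projT2 p)).

Definition star_of (a : ord) : option ostar :=
  match a with OZero => None | OS K f => Some (existT _ K f) end.

(* sup of a finite family alpha^1..alpha^r in ord: 0 if all are 0, else the
   sup of those in ord*, indexed by N_r' (r' = number of those). *)
Definition sup_list (s : seq ord) : ord :=
  let t := pmap star_of s in
  match t with
  | [::] => OZero
  | _ :: _ => sup_star (fun x : El (cN U (size t)) =>
                 tnth (in_tuple t) (iso_to (isoN U (size t)) x))
  end.

Definition sup2 (a b : ord) : ord := sup_list [:: a; b].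

End Ord.

(* A strict inequality [alpha < gamma] is witnessed by a nonempty finite list of
   subordinals of [gamma] dominating [alpha].  Given witnesses [F] for [alpha]
   and [G] for [beta], the concatenation [F ++ G] witnesses
   [sup(alpha, beta) < gamma]: every subordinal of the supremum is a subordinal
   of [alpha] or of [beta], and [x < L] implies [x < L ++ M] and [x < M ++ L],
   by padding a choice of subsets with empty ones. *)

From mathcomp Require Import all_boot.
From Stdlib Require List.
Set Implicit Arguments. Unset Strict Implicit.

Definition fsub0 (A : Type) : fsub A :=
  existT _ 0 (fun i : 'I_0 => False_rect A (notF (ltn_ord i))).

Definition fsub_cat (A : Type) (F G : fsub A) : fsub A :=
  existT _ (projT1 F + projT1 G)
    (fun i => match split i with inl j => projT2 F j | inr j => projT2 G j end).

Lemma enum_ordD (m n : nat) :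
  enum 'I_(m + n) = map (lshift n) (enum 'I_m) ++ map (@rshift m n) (enum 'I_n).
Proof.
apply: (inj_map val_inj); rewrite map_cat val_enum_ord iotaD add0n.
congr (_ ++ _); first by rewrite -map_comp (eq_map (g := val)) // val_enum_ord.
rewrite -map_comp (eq_map (g := addn m \o val)) // map_comp val_enum_ord.
by rewrite -(iotaDl m 0 n) addn0.
Qed.

Lemma Forall_tnth (T : Type) (P : T -> Prop) (s : seq T) :
  List.Forall P s -> forall i : 'I_(size s), P (tnth (in_tuple s) i).
Proof.
case: s => [|x0 s] Ps [i lt_i]; first by [].
rewrite (tnth_nth x0) /=; elim: Ps i lt_i => // y s' Py _ IH [|i] //= /IH; apply.
Qed.

Section Ordinals.
Variable U : IndexSets.
Local Notation ord := (ord U).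

Fixpoint empty_choice (L : seq ord) : choice L :=
  match L with
  | [::] => cnil U
  | b :: L' => ccons (fsub0 (ix b)) (empty_choice L')
  end.

Fixpoint cat_choice (L M : seq ord) (c : choice L) (d : choice M) : choice (L ++ M) :=
  match c in choice L0 return choice (L0 ++ M) with
  | cnil => d
  | ccons b L F c' => ccons F (cat_choice c' d)
  end.

Lemma subF0 (b : ord) : subF (fsub0 (ix b)) = [::].
Proof. by rewrite /subF /= enum_ord0. Qed.

Lemma subF_cat (b : ord) (F G : fsub (ix b)) :
  subF (fsub_cat F G) = subF F ++ subF G.
Proof.
case: F G => m f [n g]; rewrite /subF /fsub_cat /= enum_ordD map_cat -!map_comp.
by congr (_ ++ _); apply: eq_map => j /=; rewrite ?(unsplitK (inl _ j)) ?(unsplitK (inr _ j)).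
Qed.

Lemma flat_empty_choice (L : seq ord) : flat (empty_choice L) = [::].
Proof. by elim: L => //= b L ->; rewrite subF0. Qed.

Lemma flat_cat_choice (L M : seq ord) (c : choice L) (d : choice M) :
  flat (cat_choice c d) = flat c ++ flat d.
Proof. by elim: c => //= b L0 F c' ->; rewrite catA. Qed.

Lemma nonempty_cat_choice (L M : seq ord) (c : choice L) (d : choice M) :
  nonempty_choice (cat_choice c d) <-> nonempty_choice c \/ nonempty_choice d.
Proof. by elim: c => /= [|b L0 F c' ->]; tauto. Qed.

Lemma ord_lt_list_catl (x : ord) (L M : seq ord) :
  ord_lt_list x L -> ord_lt_list x (L ++ M).
Proof.
case=> c [c_ne x_le]; exists (cat_choice c (empty_choice M)).
by rewrite nonempty_cat_choice flat_cat_choice flat_empty_choice cats0; split; first left.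
Qed.

Lemma ord_lt_list_catr (x : ord) (L M : seq ord) :
  ord_lt_list x M -> ord_lt_list x (L ++ M).
Proof.
case=> c [c_ne x_le]; exists (cat_choice (empty_choice L) c).
by rewrite nonempty_cat_choice flat_cat_choice flat_empty_choice; split; first right.
Qed.

Lemma ord_le_catl (x : ord) (L M : seq ord) : ord_le x L -> ord_le x (L ++ M).
Proof. by case: x => //= K f x_le i; apply/ord_lt_list_catl/x_le. Qed.

Lemma ord_le_catr (x : ord) (L M : seq ord) : ord_le x M -> ord_le x (L ++ M).
Proof. by case: x => //= K f x_le i; apply/ord_lt_list_catr/x_le. Qed.

Lemma choice_nilP (c : choice [::]) : c = cnil U.
Proof.
refine (match c as c0 in choice L0 return
          (match L0 return choice L0 -> Prop with
           | [::] => fun c1 => c1 = cnil U | _ :: _ => fun _ => True end) c0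
        with cnil => erefl | ccons _ _ _ _ => I end).
Qed.

Lemma choice_consP (b : ord) (L : seq ord) (c : choice (b :: L)) :
  exists (F : fsub (ix b)) (c' : choice L), c = ccons F c'.
Proof.
refine (match c as c0 in choice L0 return
          (match L0 return choice L0 -> Prop with
           | [::] => fun _ => True
           | b0 :: L1 => fun c1 => exists F c', c1 = ccons F c' end) c0
        with cnil => I | ccons _ _ F c' => ex_intro _ F (ex_intro _ c' erefl) end).
Qed.

Lemma ord_ltP (x g : ord) :
  ord_lt x g <-> exists F : fsub (ix g), 0 < projT1 F /\ ord_le x (subF F).
Proof.
split=> [[c]|[F [F_ne x_le]]]; last first.
  by exists (ccons F (cnil U)); rewrite /= cats0; split; first left.
have [F [c' ->]] := choice_consP c; rewrite (choice_nilP c') /= cats0.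
by case=> -[F_ne|[]] x_le; exists F.
Qed.

Lemma sup_list_le (s L : seq ord) :
  List.Forall (fun y => ord_le y L) s -> ord_le (sup_list s) L.
Proof.
have star_le : List.Forall (fun y => ord_le y L) s ->
    List.Forall (fun z : ostar U => ord_le (OS (projT2 z)) L) (pmap (@star_of U) s).
  by elim=> //= -[|K f] s' y_le _ IH //=; constructor.
move=> /star_le; rewrite /sup_list; case: (pmap _ s) => //= z t zt_le k.
exact: (Forall_tnth zt_le _ _).
Qed.

End Ordinals.

Theorem lemma4p4 (U : IndexSets) (a b g : ord U) :
  ord_lt a g -> ord_lt b g -> ord_lt (sup2 a b) g.
Proof.
move=> /ord_ltP [F [F_ne a_le]] /ord_ltP [G [G_ne b_le]].
apply/ord_ltP; exists (fsub_cat F G); split; first by rewrite addn_gt0 F_ne.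
rewrite subF_cat; apply: sup_list_le.
by constructor; [apply: ord_le_catl | constructor; [apply: ord_le_catr |]].
Qed.
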